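(* Let $(G,M,\Delta)$ be a Garside structure, $(H,N,\delta)$ a parabolic substructure, $T$ the set of $(H,N)$-reduced elements of $G$, and $\mathcal S=\mathrm{Div}(\Delta)\setminus\{1\}$. Let $\alpha\in G$, $\beta\in\pi_H(\alpha)$ and $u\in\mathcal S$. Let $\theta\in T$ with $H\theta=H\alpha$, and assume $\theta\in M$. Then there exists $\beta'\in\pi_H(\alpha u)$ such that $d(\beta,\beta')\le3$.
   Context: Let $G$ be a group and $M$ a submonoid with $M\cap M^{-1}=\{1\}$. Define $\alpha\le_L\beta$ iff $\alpha^{-1}\beta\in M$, and $\alpha\le_R\beta$ iff $\beta\alpha^{-1}\in M$. For $a\in M$ let $\mathrm{Div}_L(a)=\{b\in M: b\le_L a\}$, $\mathrm{Div}_R(a)=\{b\in M: b\le_R a\}$; $a$ is balanced if these coincide, and then $\mathrm{Div}(a)$ denotes this set. $M$ is Noetherian if each $a\in M$ admits an $n$ such that $a$ is not a product of more than $n$ non-trivial factors. A Garside structure $(G,M,\Delta)$: $\Delta\in M$ balanced, $M$ Noetherian, $\mathrm{Div}(\Delta)$ finite and generating $M$ as a monoid and $G$ as a group, $(G,\le_L)$ a lattice with meet $\wedge_L$. A parabolic substructure $(H,N,\delta)$: $\delta\in M$ balanced, $H$ (resp. $N$) the subgroup (resp. submonoid) generated by $\mathrm{Div}(\delta)$, and $\mathrm{Div}(\delta)=\mathrm{Div}(\Delta)\cap N$; it is assumed $H\ne\{1\}$. Put $\omega=\delta^{-1}\Delta$. $a\in M$ is unmovable if $\Delta\not\le_L a$;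 every $\alpha\in G$ has a unique right $\Delta$-form $\alpha=a\Delta^p$ ($a\in M$ unmovable, $p\in\mathbb Z$). $a\in M$ is $N$-reduced if $a\wedge_L\delta=1$. $\alpha$ with right $\Delta$-form $a\Delta^p$ is $(H,N)$-reduced if $a$ is $N$-reduced and either $p=0$, or $p<0$ and $\omega\not\le_L a$. With $\lg$ the word length w.r.t. $\mathcal S$: $d(\alpha,\beta)=\lg(\alpha^{-1}\beta)$, $d(\alpha,H)=\min_{\beta\in H}d(\alpha,\beta)$, $\pi_H(\alpha)=\{\beta\in H:d(\alpha,\beta)=d(\alpha,H)\}$. *)

From Stdlib Require Import ZArith List.
Import ListNotations.
Set Implicit Arguments.

Record group := Group {
  carrier :> Type;
  gmul : carrier -> carrier -> carrier;
  ginv : carrier -> carrier;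
  gone : carrier;
  gmulA : forall x y z, gmul x (gmul y z) = gmul (gmul x y) z;
  gmul1l : forall x, gmul gone x = x;
  gmul1r : forall x, gmul x gone = x;
  gmulVl : forall x, gmul (ginv x) x = gone;
  gmulVr : forall x, gmul x (ginv x) = gone
}.

Section Garside.
Variable G : group.
Local Notation "x * y" := (gmul G x y).
Local Notation "x ^-1" := (ginv G x) (at level 3, format "x ^-1").
Local Notation "1" := (gone G).

Fixpoint prodl (l : list G) : G :=
  match l with [] => 1 | x :: l => x * prodl l end.

(** product of a list of letters x^{±1}: (true, x) stands for x^-1 *)
Fixpoint sprodl (l : list (bool * G)) : G :=
  match l with
  | [] => 1
  | (b, x) :: l => (if b then x^-1 else x) * sprodl l
  end.

Fixpoint gpow (x : G) (n : nat) : G :=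
  match n with O => 1 | S n => x * gpow x n end.

Definition zpow (x : G) (p : Z) : G :=
  match p with
  | Z0 => 1
  | Zpos n => gpow x (Pos.to_nat n)
  | Zneg n => (gpow x (Pos.to_nat n))^-1
  end.

Variable M : G -> Prop.

Definition pointed_submonoid : Prop :=
  M 1 /\ (forall x y, M x -> M y -> M (x * y)) /\
  (forall x, M x -> M (x^-1) -> x = 1).

Definition leL (x y : G) : Prop := M (x^-1 * y).
Definition leR (x y : G) : Prop := M (y * x^-1).

Definition DivL (a b : G) : Prop := M b /\ leL b a.
Definition DivR (a b : G) : Prop := M b /\ leR b a.

Definition balanced (a : G) : Prop :=
  M a /\ forall b, DivL a b <-> DivR a b.

(** for balanced a, Div(a) = Div_L(a) = Div_R(a) *)
Definition Div (a b : G) : Prop := DivL a b.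

Definition noetherian : Prop :=
  forall a, M a -> exists n : nat,
    forall l : list G, Forall (fun x => M x /\ x <> 1) l -> prodl l = a ->
      length l <= n.

Definition is_meetL (x y m : G) : Prop :=
  leL m x /\ leL m y /\ forall z, leL z x -> leL z y -> leL z m.
Definition is_joinL (x y j : G) : Prop :=
  leL x j /\ leL y j /\ forall z, leL x z -> leL y z -> leL j z.

Definition monoid_gen (S : G -> Prop) (g : G) : Prop :=
  exists l, Forall S l /\ prodl l = g.
Definition group_gen (S : G -> Prop) (g : G) : Prop :=
  exists l : list (bool * G), Forall (fun p => S (snd p)) l /\ sprodl l = g.

Definition garside (Delta : G) : Prop :=
  pointed_submonoid /\
  balanced Delta /\
  noetherian /\
  (exists l : list G, forall b, Div Delta b -> In b l) /\
  (forall a, M a <-> monoid_gen (Div Delta) a) /\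
  (forall g, group_gen (Div Delta) g) /\
  (forall x y, (exists m, is_meetL x y m) /\ (exists j, is_joinL x y j)).

Definition parabolic (Delta : G) (H N : G -> Prop) (delta : G) : Prop :=
  balanced delta /\
  (forall g, H g <-> group_gen (Div delta) g) /\
  (forall g, N g <-> monoid_gen (Div delta) g) /\
  (forall b, Div delta b <-> (Div Delta b /\ N b)) /\
  (exists h, H h /\ h <> 1).

Definition unmovable (Delta a : G) : Prop := M a /\ ~ leL Delta a.

Definition N_reduced (delta a : G) : Prop := is_meetL a delta 1.

(** α is (H,N)-reduced; the right Δ-form a Δ^p of α is unique in a
    Garside structure, so "some right Δ-form satisfies" = "the right
    Δ-form satisfies". *)
Definition HN_reduced (Delta delta alpha : G) : Prop :=
  exists (a : G) (p : Z),
    alpha = a * zpow Delta p /\ unmovable Delta a /\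
    N_reduced delta a /\
    (p = 0%Z \/ ((p < 0)%Z /\ ~ leL (delta^-1 * Delta) a)).

Definition Sgen (Delta s : G) : Prop := Div Delta s /\ s <> 1.

Definition lg_le (Delta g : G) (n : nat) : Prop :=
  exists l : list (bool * G),
    Forall (fun p => Sgen Delta (snd p)) l /\ sprodl l = g /\ length l <= n.

Definition dist_le (Delta alpha beta : G) (n : nat) : Prop :=
  lg_le Delta (alpha^-1 * beta) n.

Definition proj (Delta : G) (H : G -> Prop) (alpha beta : G) : Prop :=
  H beta /\ forall gamma, H gamma ->
    forall n, dist_le Delta alpha gamma n -> dist_le Delta alpha beta n.

Definition rcoset (H : G -> Prop) (g x : G) : Prop := exists h, H h /\ x = h * g.

End Garside.

Arguments prodl {G}. Arguments sprodl {G}. Arguments gpow {G}. Arguments zpow {G}.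
Arguments pointed_submonoid {G}. Arguments leL {G}. Arguments leR {G}.
Arguments DivL {G}. Arguments DivR {G}. Arguments balanced {G}. Arguments Div {G}.
Arguments noetherian {G}. Arguments is_meetL {G}. Arguments is_joinL {G}.
Arguments monoid_gen {G}. Arguments group_gen {G}. Arguments garside {G}.
Arguments parabolic {G}. Arguments unmovable {G}. Arguments N_reduced {G}.
Arguments HN_reduced {G}. Arguments Sgen {G}. Arguments lg_le {G}.
Arguments dist_le {G}. Arguments proj {G}. Arguments rcoset {G}.

From Stdlib Require Import ZArith List Lia Classical ClassicalEpsilon Wf_nat.
Import ListNotations.

(* The word length of [g] is the least [i + s] with [Delta^-i ≼ g ≼ Delta^s] in the
   prefix order, so distances are read off windows [x Delta^-i ≼ g ≼ x Delta^s].
   Translating by an element of [H] we may take [alpha = theta]. Since [theta] is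
   [N]-reduced it has no nontrivial common prefix with an element of [H]; hence
   [1 ∈ pi_H(theta)], and a projection [beta] at distance [D] lies in the window
   [theta Delta^-D ≼ beta ≼ theta], while every element of [H] is at distance at
   least [D] from [theta u]. If some element of [H] lies in the window
   [theta u Delta^-D ≼ _ ≼ theta u], then [join beta (theta u Delta^-D)] belongs to
   [H] (which is closed under joins and convex for ≼), is at distance [D] from
   [theta u] and at distance at most 1 from [beta]. Otherwise every element of [H]
   is at distance more than [D] from [theta u], and [beta] itself, at distance
   [D + 1], is a projection. *)

Section Development.
Variable G : group.
Local Notation "x * y" := (gmul G x y).
Local Notation "x ^-1" := (ginv G x) (at level 3, format "x ^-1").
Local Notation one := (gone G).
Local Notation "x ^+ k" := (gpow x k) (at level 29, left associativity).

Lemma mulgA_r (x y z : G) : x * y * z = x * (y * z).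
Proof. now rewrite gmulA. Qed.

Lemma mulKg (x y : G) : x^-1 * (x * y) = y.
Proof. now rewrite gmulA, gmulVl, gmul1l. Qed.

Lemma mulKVg (x y : G) : x * (x^-1 * y) = y.
Proof. now rewrite gmulA, gmulVr, gmul1l. Qed.

Lemma invg_unique (x y : G) : x * y = one -> y = x^-1.
Proof. intros E. now rewrite <- (gmul1r _ x^-1), <- E, mulKg. Qed.

Lemma invgK (x : G) : (x^-1)^-1 = x.
Proof. symmetry. apply invg_unique, gmulVl. Qed.

Lemma invg1 : one^-1 = one.
Proof. symmetry. apply invg_unique, gmul1l. Qed.

Lemma invMg (x y : G) : (x * y)^-1 = y^-1 * x^-1.
Proof. symmetry. apply invg_unique. now rewrite mulgA_r, mulKVg, gmulVr. Qed.

Ltac group_simpl :=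
  repeat (rewrite ?mulgA_r, ?invMg, ?invgK, ?invg1, ?gmul1l, ?gmul1r,
            ?gmulVl, ?gmulVr, ?mulKg, ?mulKVg).

(* [group_replace t] rewrites the LAST argument of the goal (the [y] of [x ≼ y])
   into [t]; the two must have the same free reduction. *)
Ltac group_replace t :=
  match goal with |- ?P ?x => replace x with t by (now group_simpl) end.

Lemma gpowD (x : G) a b : x ^+ (a + b) = x ^+ a * x ^+ b.
Proof.
  induction a as [|a IH]; simpl.
  - now group_simpl.
  - now rewrite IH, mulgA_r.
Qed.

Lemma gpowSr (x : G) a : x ^+ S a = x ^+ a * x.
Proof. replace (S a) with (a + 1) by lia. rewrite gpowD. simpl. now group_simpl. Qed.

Section Generation.
Variable S : G -> Prop.

Lemma monoid_gen_ind (Q : G -> Prop) :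
  Q one -> (forall s x, S s -> monoid_gen S x -> Q x -> Q (s * x)) ->
  forall x, monoid_gen S x -> Q x.
Proof.
  intros Q1 QS x [l [F <-]]. induction F as [|s l Hs F IH]; simpl; auto.
  apply QS; auto. now exists l.
Qed.

Lemma monoid_gen_one : monoid_gen S one.
Proof. now exists []. Qed.

Lemma monoid_gen_mul x y : monoid_gen S x -> monoid_gen S y -> monoid_gen S (x * y).
Proof.
  intros [l1 [F1 <-]] [l2 [F2 <-]]. exists (l1 ++ l2). split.
  - now apply Forall_app.
  - clear. induction l1 as [|s l1 IH]; simpl.
    + now group_simpl.
    + now rewrite IH, mulgA_r.
Qed.

Lemma monoid_gen_letter s : S s -> monoid_gen S s.
Proof. intros Hs. exists [s]. split; auto. simpl. now group_simpl. Qed.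

Lemma group_gen_ind (Q : G -> Prop) :
  Q one -> (forall s x, S s -> Q x -> Q (s * x)) ->
  (forall s x, S s -> Q x -> Q (s^-1 * x)) ->
  forall g, group_gen S g -> Q g.
Proof.
  intros Q1 QS QV g [l [F <-]].
  induction F as [|[[|] s] l Hs F IH]; simpl in *; auto.
Qed.

Lemma sprodl_app (l1 l2 : list (bool * G)) : sprodl (l1 ++ l2) = sprodl l1 * sprodl l2.
Proof.
  induction l1 as [|[b x] l IH]; simpl.
  - now group_simpl.
  - now rewrite IH, mulgA_r.
Qed.

Lemma group_gen_mul x y : group_gen S x -> group_gen S y -> group_gen S (x * y).
Proof.
  intros [l1 [F1 <-]] [l2 [F2 <-]]. exists (l1 ++ l2).
  split; [now apply Forall_app | apply sprodl_app].
Qed.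

Lemma group_gen_letter (b : bool) s : S s -> group_gen S (if b then s^-1 else s).
Proof. intros Hs. exists [(b, s)]. split; auto. simpl. now rewrite gmul1r. Qed.

Lemma group_gen_inv g : group_gen S g -> group_gen S g^-1.
Proof.
  revert g. apply group_gen_ind.
  - rewrite invg1. now exists [].
  - intros s x Hs IH. rewrite invMg. now apply group_gen_mul, (group_gen_letter true).
  - intros s x Hs IH. rewrite invMg, invgK. now apply group_gen_mul, (group_gen_letter false).
Qed.

Lemma monoid_gen_group_gen x : monoid_gen S x -> group_gen S x.
Proof.
  revert x. apply monoid_gen_ind.
  - now exists [].
  - intros s x Hs _ IH. apply group_gen_mul; auto. now apply (group_gen_letter false).
Qed.

End Generation.

(** * The prefix order *)

Section Garside.
Variable M : G -> Prop.
Variable Delta : G.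
Local Notation "x ≼ y" := (leL M x y) (at level 70).

Hypothesis M_one : M one.
Hypothesis M_mul : forall x y, M x -> M y -> M (x * y).
Hypothesis M_antisym : forall x, M x -> M x^-1 -> x = one.
Hypothesis Delta_balanced : balanced M Delta.
Hypothesis M_generated : forall a, M a <-> monoid_gen (Div M Delta) a.
Hypothesis G_generated : forall g, group_gen (Div M Delta) g.
Hypothesis lattice :
  forall x y, (exists m, is_meetL M x y m) /\ (exists j, is_joinL M x y j).

Lemma le_refl x : x ≼ x.
Proof. unfold leL. now group_simpl. Qed.

Lemma le_trans x y z : x ≼ y -> y ≼ z -> x ≼ z.
Proof. unfold leL. intros. group_replace (x^-1 * y * (y^-1 * z)). auto. Qed.

Lemma le_antisym x y : x ≼ y -> y ≼ x -> x = y.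
Proof.
  unfold leL. intros Lxy Lyx.
  assert (E : x^-1 * y = one) by (apply M_antisym; [|group_simpl]; assumption).
  now rewrite <- (mulKVg x y), E, gmul1r.
Qed.

Lemma le_lmul g x y : g * x ≼ g * y <-> x ≼ y.
Proof. unfold leL. now group_simpl. Qed.

Lemma le_ldiv_l g x y : g * x ≼ y <-> x ≼ g^-1 * y.
Proof. unfold leL. now group_simpl. Qed.

Lemma one_le x : one ≼ x <-> M x.
Proof. unfold leL. now group_simpl. Qed.

Lemma le_one x : x ≼ one <-> M x^-1.
Proof. unfold leL. now group_simpl. Qed.

Lemma le_mulr x m : M m -> x ≼ x * m.
Proof. unfold leL. now group_simpl. Qed.

Lemma le_mulVr x m : M m -> x * m^-1 ≼ x.
Proof. unfold leL. now group_simpl. Qed.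

Lemma Div_M d s : Div M d s -> M s.
Proof. now intros [Ms _]. Qed.

Lemma balanced_M d : balanced M d -> M d.
Proof. now intros [Md _]. Qed.

Lemma Div_one d : balanced M d -> Div M d one.
Proof. intros Bd. split; [exact M_one | unfold leL; group_simpl; now apply balanced_M]. Qed.

Lemma Div_self d : balanced M d -> Div M d d.
Proof. intros Bd. split; [now apply balanced_M | unfold leL; now group_simpl]. Qed.

Lemma Div_lcompl d s : balanced M d -> Div M d s -> Div M d (s^-1 * d).
Proof.
  intros [_ Bd] [Ms Lsd]. apply Bd. split; [exact Lsd|].
  unfold leR. now group_simpl.
Qed.

Lemma Div_rcompl d s : balanced M d -> Div M d s -> Div M d (d * s^-1).
Proof.
  intros [_ Bd] Ds. apply Bd in Ds as [Ms Rsd]. split; [exact Rsd|].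
  unfold leL. now group_simpl.
Qed.

Lemma Div_conj d s : balanced M d -> Div M d s -> Div M d (d^-1 * s * d).
Proof.
  intros Bd Ds. group_replace ((s^-1 * d)^-1 * d).
  now apply Div_lcompl, Div_lcompl.
Qed.

Lemma Div_conjV d s : balanced M d -> Div M d s -> Div M d (d * s * d^-1).
Proof.
  intros Bd Ds. group_replace (d * (d * s^-1)^-1).
  now apply Div_rcompl, Div_rcompl.
Qed.

Lemma Div_conj_pow d k s : balanced M d -> Div M d s ->
  Div M d ((d ^+ k)^-1 * s * d ^+ k).
Proof.
  intros Bd. revert s. induction k as [|k IH]; intros s Ds; simpl.
  - now group_simpl.
  - group_replace ((d ^+ k)^-1 * (d^-1 * s * d) * d ^+ k).
    now apply IH, Div_conj.
Qed.

Lemma Div_conjV_pow d k s : balanced M d -> Div M d s ->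
  Div M d (d ^+ k * s * (d ^+ k)^-1).
Proof.
  intros Bd. revert s. induction k as [|k IH]; intros s Ds; simpl.
  - now group_simpl.
  - group_replace (d * (d ^+ k * s * (d ^+ k)^-1) * d^-1).
    now apply Div_conjV, IH.
Qed.

Lemma Div_ldiv d s r : balanced M d -> Div M d s -> Div M d r -> s ≼ r ->
  Div M d (s^-1 * r).
Proof.
  intros Bd Ds [_ Lrd] Lsr. split; [exact Lsr|]. unfold leL in *.
  group_replace (r^-1 * d * (d^-1 * s * d)).
  apply M_mul; [exact Lrd|]. now apply Div_M with d, Div_conj.
Qed.

Lemma M_Delta : M Delta.
Proof. now apply balanced_M. Qed.

Lemma M_gpow x k : M x -> M (x ^+ k).
Proof. intros Mx. induction k; simpl; auto. Qed.

Lemma le_gpow_add x a b : M x -> x ^+ a ≼ x ^+ (a + b).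
Proof. intros Mx. rewrite gpowD. now apply le_mulr, M_gpow. Qed.

Lemma M_conj_Delta_pow k x : M x -> M ((Delta ^+ k)^-1 * x * Delta ^+ k).
Proof.
  rewrite M_generated. revert x. apply monoid_gen_ind.
  - group_simpl. exact M_one.
  - intros s x Ds _ IH.
    group_replace (((Delta ^+ k)^-1 * s * Delta ^+ k) * ((Delta ^+ k)^-1 * x * Delta ^+ k)).
    apply M_mul; [|exact IH]. now apply Div_M with Delta, Div_conj_pow.
Qed.

Lemma M_conjV_Delta_pow k x : M x -> M (Delta ^+ k * x * (Delta ^+ k)^-1).
Proof.
  rewrite M_generated. revert x. apply monoid_gen_ind.
  - group_simpl. exact M_one.
  - intros s x Ds _ IH.
    group_replace ((Delta ^+ k * s * (Delta ^+ k)^-1) * (Delta ^+ k * x * (Delta ^+ k)^-1)).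
    apply M_mul; [|exact IH]. now apply Div_M with Delta, Div_conjV_pow.
Qed.

Lemma le_mul_Delta_pow k x y : x * Delta ^+ k ≼ y * Delta ^+ k <-> x ≼ y.
Proof.
  unfold leL. split; intros L.
  - apply (M_conjV_Delta_pow k) in L. revert L. now group_simpl.
  - group_replace ((Delta ^+ k)^-1 * (x^-1 * y) * Delta ^+ k). now apply M_conj_Delta_pow.
Qed.

Lemma le_mul_Delta x y : x * Delta ≼ y * Delta <-> x ≼ y.
Proof. rewrite <- (le_mul_Delta_pow 1 x y). simpl. now rewrite gmul1r. Qed.

Definition meet x y : G :=
  proj1_sig (constructive_indefinite_description _ (proj1 (lattice x y))).
Definition join x y : G :=
  proj1_sig (constructive_indefinite_description _ (proj2 (lattice x y))).

Lemma meet_spec x y : is_meetL M x y (meet x y).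
Proof. exact (proj2_sig _). Qed.

Lemma join_spec x y : is_joinL M x y (join x y).
Proof. exact (proj2_sig _). Qed.

Lemma meet_l x y : meet x y ≼ x. Proof. apply meet_spec. Qed.
Lemma meet_r x y : meet x y ≼ y. Proof. apply meet_spec. Qed.
Lemma meet_glb x y z : z ≼ x -> z ≼ y -> z ≼ meet x y. Proof. apply meet_spec. Qed.
Lemma join_l x y : x ≼ join x y. Proof. apply join_spec. Qed.
Lemma join_r x y : y ≼ join x y. Proof. apply join_spec. Qed.
Lemma join_lub x y z : x ≼ z -> y ≼ z -> join x y ≼ z. Proof. apply join_spec. Qed.

Lemma join_lmul g x y : join (g * x) (g * y) = g * join x y.
Proof.
  apply le_antisym.
  - apply join_lub; apply le_lmul; [apply join_l | apply join_r].
  - apply le_ldiv_l, join_lub; apply le_ldiv_l; [apply join_l | apply join_r].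
Qed.

(** * Word length *)

Local Notation lg := (lg_le M Delta).

Lemma lg_le_mono g n m : lg g n -> n <= m -> lg g m.
Proof. intros [l [F [E L]]] Lnm. exists l. repeat split; auto. lia. Qed.

Lemma lg_le_one n : lg one n.
Proof. exists []. repeat split; auto. simpl. lia. Qed.

Lemma lg_le_mul g h n m : lg g n -> lg h m -> lg (g * h) (n + m).
Proof.
  intros [l1 [F1 [<- L1]]] [l2 [F2 [<- L2]]]. exists (l1 ++ l2).
  split; [now apply Forall_app|]. split; [apply sprodl_app|]. rewrite length_app. lia.
Qed.

Lemma lg_le_letter (b : bool) t : Div M Delta t -> lg (if b then t^-1 else t) 1.
Proof.
  intros Dt. destruct (classic (t = one)) as [->|Nt].
  - destruct b; [rewrite invg1|]; apply lg_le_one.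
  - exists [(b, t)]. split; [constructor; [split; assumption | constructor]|].
    split; [destruct b; apply gmul1r | simpl; lia].
Qed.

Lemma lg_le_exists g : exists n, lg g n.
Proof.
  pose proof (G_generated g) as Gg. revert g Gg. apply group_gen_ind.
  - exists 0. apply lg_le_one.
  - intros s x Ds [n L]. exists (1 + n).
    apply lg_le_mul; [apply (lg_le_letter false), Ds | exact L].
  - intros s x Ds [n L]. exists (1 + n).
    apply lg_le_mul; [apply (lg_le_letter true), Ds | exact L].
Qed.

Lemma window_of_lg_le g n : lg g n ->
  exists i s, i + s <= n /\ (Delta ^+ i)^-1 ≼ g /\ g ≼ Delta ^+ s.
Proof.
  intros [l [F [<- L]]].
  enough (W : exists i s, i + s = length l /\
                (Delta ^+ i)^-1 ≼ sprodl l /\ sprodl l ≼ Delta ^+ s).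
  { destruct W as [i [s [E W]]]. exists i, s. split; [lia | exact W]. }
  clear L. induction F as [|[b t] l [Dt _] F IH]; simpl.
  - exists 0, 0. simpl. rewrite invg1. split; [lia | split; apply le_refl].
  - destruct IH as [i [s [Lis [Li Ls]]]]. destruct b.
    + exists (S i), s. split; [lia | split].
      * apply le_trans with (t^-1 * (Delta ^+ i)^-1); [|now apply le_lmul].
        rewrite gpowSr. unfold leL.
        group_replace (Delta ^+ i * (Delta * t^-1) * (Delta ^+ i)^-1).
        now apply M_conjV_Delta_pow, Div_M with Delta, Div_rcompl.
      * apply le_trans with (t^-1 * Delta ^+ s); [now apply le_lmul|].
        unfold leL. group_replace ((Delta ^+ s)^-1 * t * Delta ^+ s).
        now apply M_conj_Delta_pow, Div_M with Delta.
    + exists i, (S s). split; [lia | split].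
      * apply le_trans with (t * (Delta ^+ i)^-1); [|now apply le_lmul].
        unfold leL. group_replace (Delta ^+ i * t * (Delta ^+ i)^-1).
        now apply M_conjV_Delta_pow, Div_M with Delta.
      * apply le_trans with (t * Delta ^+ s); [now apply le_lmul|].
        unfold leL. simpl. group_replace ((Delta ^+ s)^-1 * (t^-1 * Delta) * Delta ^+ s).
        apply M_conj_Delta_pow, Dt.
Qed.

Lemma lg_le_of_window n : forall i s g, i + s = n ->
  (Delta ^+ i)^-1 ≼ g -> g ≼ Delta ^+ s -> lg g n.
Proof.
  induction n as [|n IH]; intros i s g E Lig Lgs.
  - assert (i = 0) by lia. assert (s = 0) by lia. subst. simpl in *.
    rewrite invg1 in Lig. rewrite (le_antisym g one); auto. apply lg_le_one.
  - replace (S n) with (n + 1) by lia. destruct s as [|s].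
    + destruct i as [|i]; [lia|]. simpl in Lig, Lgs.
      set (y := join g (Delta ^+ i)^-1).
      assert (Ly : lg y n).
      { apply (IH i 0); [lia | apply join_r |]. simpl. apply join_lub; [exact Lgs|].
        apply le_one. rewrite invgK. apply M_gpow, M_Delta. }
      assert (Dt : Div M Delta (g^-1 * y)).
      { split; [apply join_l|]. apply le_ldiv_l. rewrite invgK.
        apply join_lub; [apply le_mulr, M_Delta|].
        replace ((Delta ^+ i)^-1) with ((Delta * Delta ^+ i)^-1 * Delta) by now group_simpl.
        now apply le_mul_Delta. }
      replace g with (y * (g^-1 * y)^-1) by now group_simpl.
      apply lg_le_mul; [exact Ly | apply (lg_le_letter true), Dt].
    + set (y := meet g (Delta ^+ s)).
      assert (Ly : lg y n).
      { apply (IH i s); [lia | | apply meet_r]. apply meet_glb; [exact Lig|].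
        apply le_trans with one; [apply le_one; rewrite invgK | apply one_le];
          apply M_gpow, M_Delta. }
      assert (Dt : Div M Delta (y^-1 * g)).
      { split; [apply meet_l|]. apply le_ldiv_l. rewrite invgK.
        replace g with (g * Delta^-1 * Delta) at 1 by now group_simpl.
        apply le_mul_Delta, meet_glb; [apply le_mulVr, M_Delta|].
        apply le_mul_Delta. rewrite <- gpowSr. now group_simpl. }
      replace g with (y * (y^-1 * g)) by now group_simpl.
      apply lg_le_mul; [exact Ly | apply (lg_le_letter false), Dt].
Qed.

Lemma dist_le_window x g n :
  dist_le M Delta x g n <->
  exists i s, i + s <= n /\ x * (Delta ^+ i)^-1 ≼ g /\ g ≼ x * Delta ^+ s.
Proof.
  unfold dist_le. split.
  - intros Hd. destruct (window_of_lg_le _ _ Hd) as [i [s [L [Li Ls]]]].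
    exists i, s. split; [exact L|]. split; [now apply le_ldiv_l|].
    apply le_ldiv_l in Ls. now rewrite invgK in Ls.
  - intros [i [s [L [Li Ls]]]]. apply lg_le_mono with (i + s); [|exact L].
    apply (lg_le_of_window _ i s); [reflexivity | now apply le_ldiv_l |].
    apply le_ldiv_l. now rewrite invgK.
Qed.

Lemma dist_le_lmul h x y n : dist_le M Delta (h * x) (h * y) n <-> dist_le M Delta x y n.
Proof. unfold dist_le. now rewrite invMg, mulgA_r, mulKg. Qed.

(** * The parabolic subgroup *)

Section Parabolic.
Variables (H N : G -> Prop) (delta : G).
Hypothesis delta_balanced : balanced M delta.
Hypothesis H_generated : forall g, H g <-> group_gen (Div M delta) g.
Hypothesis N_generated : forall g, N g <-> monoid_gen (Div M delta) g.
Hypothesis Div_delta : forall b, Div M delta b <-> Div M Delta b /\ N b.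

Lemma N_one : N one.
Proof. apply N_generated, monoid_gen_one. Qed.

Lemma N_mul x y : N x -> N y -> N (x * y).
Proof. rewrite !N_generated. apply monoid_gen_mul. Qed.

Lemma Div_delta_N s : Div M delta s -> N s.
Proof. intros Ds. now apply N_generated, monoid_gen_letter. Qed.

Lemma Div_delta_Delta s : Div M delta s -> Div M Delta s.
Proof. now intros Ds%Div_delta. Qed.

Lemma N_M x : N x -> M x.
Proof.
  rewrite N_generated. revert x. apply monoid_gen_ind; [exact M_one|].
  intros s x Ds _ Mx. apply M_mul; [now apply Div_M with delta | exact Mx].
Qed.

Lemma N_H x : N x -> H x.
Proof. rewrite N_generated, H_generated. apply monoid_gen_group_gen. Qed.

Lemma H_one : H one.
Proof. apply H_generated. now exists []. Qed.

Lemma H_mul x y : H x -> H y -> H (x * y).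
Proof. rewrite !H_generated. apply group_gen_mul. Qed.

Lemma H_inv x : H x -> H x^-1.
Proof. rewrite !H_generated. apply group_gen_inv. Qed.

Lemma N_gpow k : N (delta ^+ k).
Proof.
  induction k as [|k IH]; simpl; [exact N_one|]. apply N_mul; [|exact IH].
  now apply Div_delta_N, Div_self.
Qed.

Lemma H_decomp g : H g -> exists k n, N n /\ g = (delta ^+ k)^-1 * n.
Proof.
  rewrite H_generated. revert g. apply group_gen_ind.
  - exists 0, one. split; [exact N_one | simpl; now group_simpl].
  - intros s x Ds [k [n [Nn ->]]]. exists k, (delta ^+ k * s * (delta ^+ k)^-1 * n).
    split; [|now group_simpl]. apply N_mul; [|exact Nn].
    now apply Div_delta_N, Div_conjV_pow.
  - intros s x Ds [k [n [Nn ->]]].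
    exists (S k), (delta ^+ k * (delta * s^-1) * (delta ^+ k)^-1 * n).
    split; [|rewrite gpowSr; now group_simpl]. apply N_mul; [|exact Nn].
    now apply Div_delta_N, Div_conjV_pow, Div_rcompl.
Qed.

(* Induction on an [N]-word [s * n]: the meet of [s * n] with [Delta] lies between
   [s] and [s * meet n Delta]. *)
Lemma N_head n : N n -> Div M delta (meet n Delta) /\ N ((meet n Delta)^-1 * n).
Proof.
  rewrite N_generated. revert n. apply monoid_gen_ind.
  - replace (meet one Delta) with one.
    + split; [now apply Div_one|]. group_simpl. exact N_one.
    + apply le_antisym; [|apply meet_l].
      apply meet_glb; [apply le_refl | apply one_le, M_Delta].
  - intros s n Ds Gn [Dt Nt]. apply N_generated in Gn.
    set (t := meet n Delta) in *. set (d := meet (s * n) Delta).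
    assert (Lsd : s ≼ d).
    { apply meet_glb; [now apply le_mulr, N_M | apply Div_delta_Delta, Ds]. }
    assert (Lds : s^-1 * d ≼ t).
    { apply meet_glb; apply le_ldiv_l; rewrite invgK; [apply meet_l|].
      apply le_trans with Delta; [apply meet_r|]. unfold leL.
      group_replace (Delta^-1 * s * Delta).
      now apply Div_M with Delta, Div_conj, Div_delta_Delta. }
    assert (Dsd : Div M delta (s^-1 * d))
      by (split; [exact Lsd | apply le_trans with t; [exact Lds | apply Dt]]).
    assert (Nd : N d).
    { replace d with (s * (s^-1 * d)) by now group_simpl. now apply N_mul; apply Div_delta_N. }
    split.
    + apply Div_delta. split; [split; [now apply N_M | apply meet_r] | exact Nd].
    + group_replace ((s^-1 * d)^-1 * t * (t^-1 * n)).
      apply N_mul; [apply Div_delta_N, Div_ldiv |]; auto.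
Qed.

Lemma N_prefix_closed x n : M x -> N n -> x ≼ n -> N x /\ N (x^-1 * n).
Proof.
  rewrite M_generated. intros Gx. revert x Gx n.
  apply (monoid_gen_ind _ (fun x => forall n, N n -> x ≼ n -> N x /\ N (x^-1 * n))).
  - intros n Nn _. split; [exact N_one | now group_simpl].
  - intros s x Ds Gx IH n Nn Lxn. apply M_generated in Gx.
    destruct (N_head n Nn) as [Dr Nr].
    assert (Lsr : s ≼ meet n Delta).
    { apply meet_glb; [|apply Ds]. apply le_trans with (s * x); auto. now apply le_mulr. }
    assert (Dsd : Div M delta s)
      by (split; [apply Ds | apply le_trans with (meet n Delta); [exact Lsr | apply Dr]]).
    assert (Nsn : N (s^-1 * n)).
    { group_replace ((s^-1 * meet n Delta) * ((meet n Delta)^-1 * n)).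
      apply N_mul; [apply Div_delta_N, Div_ldiv |]; auto. }
    destruct (IH (s^-1 * n) Nsn) as [Nx Nxn]; [now apply le_ldiv_l|].
    split; [apply N_mul; auto; now apply Div_delta_N|].
    now group_replace (x^-1 * (s^-1 * n)).
Qed.

Lemma N_of_H_M h : H h -> M h -> N h.
Proof.
  intros Hh Mh. destruct (H_decomp h Hh) as [k [n [Nn ->]]].
  apply (N_prefix_closed (delta ^+ k) n); [apply N_M, N_gpow | exact Nn | exact Mh].
Qed.

Lemma H_convex a c w : H a -> H c -> a ≼ w -> w ≼ c -> H w.
Proof.
  intros Ha Hc Law Lwc.
  assert (Nac : N (a^-1 * c)).
  { apply N_of_H_M; [apply H_mul, Hc; now apply H_inv | now apply le_trans with w]. }
  assert (Naw : N (a^-1 * w))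
    by (apply (N_prefix_closed _ (a^-1 * c)); auto; now apply le_lmul).
  replace w with (a * (a^-1 * w)) by now group_simpl. now apply H_mul, N_H.
Qed.

Lemma N_le_gpow n : N n -> exists K, n ≼ delta ^+ K.
Proof.
  rewrite N_generated. revert n. apply monoid_gen_ind; [exists 0; apply le_refl|].
  intros s n Ds _ [K L]. exists (S K).
  apply le_trans with (s * delta ^+ K); [now apply le_lmul|].
  unfold leL. simpl. group_replace ((delta ^+ K)^-1 * (s^-1 * delta) * delta ^+ K).
  now apply Div_M with delta, Div_conj_pow, Div_lcompl.
Qed.

Lemma N_join a b : N a -> N b -> N (join a b).
Proof.
  intros Na Nb. destruct (N_le_gpow a Na) as [Ka La]. destruct (N_le_gpow b Nb) as [Kb Lb].
  apply (N_prefix_closed _ (delta ^+ (Ka + Kb))); [| apply N_gpow |].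
  - apply one_le, le_trans with a; [now apply one_le, N_M | apply join_l].
  - assert (Md : M delta) by now apply balanced_M.
    apply join_lub; [apply le_trans with (delta ^+ Ka); auto; now apply le_gpow_add|].
    apply le_trans with (delta ^+ Kb); auto. rewrite Nat.add_comm. now apply le_gpow_add.
Qed.

Lemma H_join x y : H x -> H y -> H (join x y).
Proof.
  intros Hx Hy.
  destruct (H_decomp x Hx) as [k [a [Na ->]]]. destruct (H_decomp y Hy) as [l [b [Nb ->]]].
  replace ((delta ^+ k)^-1 * a) with ((delta ^+ (l + k))^-1 * (delta ^+ l * a))
    by (rewrite gpowD; now group_simpl).
  replace ((delta ^+ l)^-1 * b) with ((delta ^+ (l + k))^-1 * (delta ^+ k * b))
    by (rewrite Nat.add_comm, gpowD; now group_simpl).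
  rewrite join_lmul. apply H_mul; [apply H_inv, N_H, N_gpow|].
  apply N_H, N_join; apply N_mul; auto; apply N_gpow.
Qed.

Lemma N_reduced_M th : N_reduced M delta th -> M th.
Proof. intros [L _]. now apply one_le. Qed.

Lemma N_reduced_no_N_prefix th e : N_reduced M delta th -> N e -> e ≼ th -> e = one.
Proof.
  intros [_ [_ Red]] Ne. rewrite N_generated in Ne. revert e Ne.
  apply (monoid_gen_ind _ (fun e => e ≼ th -> e = one)); [reflexivity|].
  intros s e Ds Ge IH Lset.
  assert (Lst : s ≼ th).
  { apply le_trans with (s * e); auto. apply le_mulr, N_M, N_generated, Ge. }
  assert (s = one) as ->.
  { apply M_antisym; [now apply Div_M with delta|].
    apply le_one, Red; [exact Lst | apply Ds]. }
  rewrite gmul1l in *. auto.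
Qed.

(* Write [g = delta^-k n]; then [join (meet (delta^k th) n) delta^k] is [delta^k]
   times an [N]-prefix of [th], which must be trivial. *)
Lemma N_reduced_meet_H th g x :
  N_reduced M delta th -> H g -> x ≼ th -> x ≼ g -> x ≼ one.
Proof.
  intros Red Hg Lxt Lxg. pose proof (N_reduced_M th Red) as Mth.
  destruct (H_decomp g Hg) as [k [n [Nn ->]]].
  assert (Mk : M (delta ^+ k)) by apply N_M, N_gpow.
  set (z := meet (delta ^+ k * th) n).
  assert (Nz : N z).
  { apply (N_prefix_closed z n); [| exact Nn | apply meet_r].
    apply one_le, meet_glb; apply one_le; [now apply M_mul | now apply N_M]. }
  set (J := join z (delta ^+ k)).
  assert (EJ : (delta ^+ k)^-1 * J = one).
  { apply (N_reduced_no_N_prefix th); [exact Red | |].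
    - apply (N_prefix_closed (delta ^+ k) J); [exact Mk | | apply join_r].
      apply N_join; [exact Nz | apply N_gpow].
    - apply le_ldiv_l. rewrite invgK. apply join_lub; [apply meet_l | now apply le_mulr]. }
  assert (Lzk : z ≼ delta ^+ k).
  { replace (delta ^+ k) with J by (rewrite <- (mulKVg (delta ^+ k) J), EJ; now group_simpl).
    apply join_l. }
  apply (le_lmul (delta ^+ k)). rewrite gmul1r. apply le_trans with z; [|exact Lzk].
  apply meet_glb; [now apply le_lmul | now apply le_ldiv_l].
Qed.

Lemma N_reduced_of_HN_reduced th :
  HN_reduced M Delta delta th -> M th -> N_reduced M delta th.
Proof.
  intros [a [p [-> [[_ Unmov] [Red Hp]]]]] Mth. destruct p as [|q|q]; unfold zpow in *.
  - now rewrite gmul1r.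
  - destruct Hp as [Hp|[Hp _]]; [discriminate | lia].
  - exfalso. apply Unmov. pose proof (Pos2Nat.is_pos q) as Pq.
    destruct (Pos.to_nat q) as [|m]; [lia|]. simpl in Mth.
    replace a with (a * (Delta * Delta ^+ m)^-1 * Delta * Delta ^+ m) by now group_simpl.
    apply le_trans with (a * (Delta * Delta ^+ m)^-1 * Delta).
    2: { apply le_mulr, M_gpow, M_Delta. }
    rewrite <- (gmul1l _ Delta) at 1. now apply le_mul_Delta, one_le.
Qed.

Lemma proj_lmul h x b : H h -> proj M Delta H x b -> proj M Delta H (h * x) (h * b).
Proof.
  intros Hh [Hb Pb]. split; [now apply H_mul|]. intros g Hg n Hd.
  rewrite dist_le_lmul. apply (Pb (h^-1 * g)); [now apply H_mul, Hg; apply H_inv|].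
  rewrite <- (dist_le_lmul h), mulKVg. exact Hd.
Qed.

(** * Projections onto [H] *)

Section ProjectionStep.
Variables (theta u beta : G) (D : nat).
Hypothesis theta_reduced : N_reduced M delta theta.
Hypothesis u_Div : Div M Delta u.
Hypothesis beta_proj : proj M Delta H theta beta.
Hypothesis beta_dist : dist_le M Delta theta beta D.
Hypothesis beta_dist_min : forall n, dist_le M Delta theta beta n -> D <= n.

(* The witness is [1 : H], whose distance to [theta] is then at most [j]. *)
Lemma H_window_bound j g : H g -> theta * (Delta ^+ j)^-1 ≼ g -> D <= j.
Proof.
  intros Hg Lg. apply beta_dist_min, (proj2 beta_proj one H_one).
  apply dist_le_window. exists j, 0. split; [lia|]. split.
  - apply (N_reduced_meet_H theta g); auto. apply le_mulVr, M_gpow, M_Delta.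
  - simpl. rewrite gmul1r. now apply one_le, N_reduced_M.
Qed.

Lemma beta_window : theta * (Delta ^+ D)^-1 ≼ beta /\ beta ≼ theta.
Proof.
  apply dist_le_window in beta_dist as [i [s [L [Li Ls]]]].
  assert (D <= i) by (apply (H_window_bound i beta); [apply beta_proj | exact Li]).
  assert (i = D) as -> by lia. assert (s = 0) as -> by lia.
  simpl in Ls. rewrite gmul1r in Ls. now split.
Qed.

Lemma dist_theta_u_H_window g m : H g -> dist_le M Delta (theta * u) g m ->
  exists j s, j + s <= m /\ D <= j /\
    theta * u * (Delta ^+ j)^-1 ≼ g /\ g ≼ theta * u * Delta ^+ s.
Proof.
  intros Hg Hd. apply dist_le_window in Hd as [j [s [L [Lj Ls]]]].
  exists j, s. repeat split; auto.
  apply (H_window_bound j g Hg). apply le_trans with (theta * u * (Delta ^+ j)^-1); auto.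
  rewrite mulgA_r. apply le_lmul. unfold leL.
  group_replace (Delta ^+ j * u * (Delta ^+ j)^-1).
  now apply M_conjV_Delta_pow, Div_M with Delta.
Qed.

Lemma proj_step_window g0 : H g0 ->
  theta * u * (Delta ^+ D)^-1 ≼ g0 -> g0 ≼ theta * u ->
  exists beta', proj M Delta H (theta * u) beta' /\ dist_le M Delta beta beta' 1.
Proof.
  intros Hg0 Lg0 Lg0'. set (x := theta * u * (Delta ^+ D)^-1) in *.
  destruct beta_window as [Lb Lbt]. assert (Hb : H beta) by apply beta_proj.
  exists (join beta x). split; [split|].
  - apply (H_convex beta (join beta g0)); [exact Hb | now apply H_join | apply join_l |].
    apply join_lub; [apply join_l | apply le_trans with g0; [exact Lg0 | apply join_r]].
  - intros g Hg m Hd. destruct (dist_theta_u_H_window g m Hg Hd) as [j [s [L [Dj _]]]].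
    apply dist_le_window. exists D, 0. split; [lia|]. split; [apply join_r|].
    simpl. rewrite gmul1r. apply join_lub; [|apply le_mulVr, M_gpow, M_Delta].
    apply le_trans with theta; [exact Lbt | now apply le_mulr, Div_M with Delta].
  - assert (Ltb : theta ≼ beta * Delta ^+ D).
    { rewrite <- (le_mul_Delta_pow D) in Lb. revert Lb. now group_simpl. }
    apply dist_le_window. exists 0, 1. split; [lia|]. simpl. rewrite invg1, !gmul1r.
    split; [apply join_l|]. apply join_lub; [apply le_mulr, M_Delta|].
    rewrite <- (le_mul_Delta_pow D).
    replace (x * Delta ^+ D) with (theta * u) by (unfold x; now group_simpl).
    replace (beta * Delta * Delta ^+ D) with (beta * Delta ^+ D * Delta)
      by (rewrite !mulgA_r, <- gpowSr; reflexivity).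
    apply le_trans with (theta * Delta); [apply le_lmul, u_Div | now apply le_mul_Delta].
Qed.

Lemma proj_step_no_window :
  ~ (exists g0, H g0 /\ theta * u * (Delta ^+ D)^-1 ≼ g0 /\ g0 ≼ theta * u) ->
  proj M Delta H (theta * u) beta.
Proof.
  intros NoWindow. split; [apply beta_proj|]. intros g Hg m Hd.
  destruct (dist_theta_u_H_window g m Hg Hd) as [j [s [L [Dj [Lj Ls]]]]].
  destruct (Nat.le_gt_cases m D) as [mD|mD].
  - exfalso. apply NoWindow. exists g.
    assert (j = D) as -> by lia. assert (s = 0) as -> by lia.
    simpl in Ls. rewrite gmul1r in Ls. auto.
  - unfold dist_le. rewrite invMg, mulgA_r. apply lg_le_mono with (1 + D); [|lia].
    apply lg_le_mul; [apply (lg_le_letter true), u_Div | exact beta_dist].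
Qed.

End ProjectionStep.

Lemma proj_step theta beta u : N_reduced M delta theta -> Div M Delta u ->
  proj M Delta H theta beta ->
  exists beta', proj M Delta H (theta * u) beta' /\ dist_le M Delta beta beta' 1.
Proof.
  intros Red Du Pb.
  destruct (dec_inh_nat_subset_has_unique_least_element (dist_le M Delta theta beta))
    as [D [[HD Dmin] _]]; [intros n; apply classic | apply lg_le_exists |].
  destruct (classic (exists g0, H g0 /\ theta * u * (Delta ^+ D)^-1 ≼ g0 /\
                                 g0 ≼ theta * u)) as [[g0 [Hg0 [L1 L2]]]|NoWindow].
  - now apply (proj_step_window theta u beta D) with g0.
  - exists beta. split; [now apply (proj_step_no_window theta u beta D)|].
    unfold dist_le. rewrite gmulVl. apply lg_le_one.
Qed.

End Parabolic.

End Garside.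
End Development.

Theorem lemma5p9 (G : group) (M : G -> Prop) (Delta : G)
    (H N : G -> Prop) (delta : G) :
  garside M Delta ->
  parabolic M Delta H N delta ->
  forall (alpha beta u theta : G),
    proj M Delta H alpha beta ->
    Sgen M Delta u ->
    HN_reduced M Delta delta theta ->
    (forall x, rcoset H theta x <-> rcoset H alpha x) ->
    M theta ->
    exists beta' : G,
      proj M Delta H (gmul G alpha u) beta' /\ dist_le M Delta beta beta' 3.
Proof.
  intros [[M_one [M_mul M_antisym]] [Delta_bal [_ [_ [M_gen [G_gen lattice]]]]]]
    [delta_bal [H_gen [N_gen [Div_delta _]]]] alpha beta u theta Pb [Du _] HNred Coset Mth.
  assert (Red : N_reduced M delta theta)
    by (eapply N_reduced_of_HN_reduced with (Delta := Delta); eauto).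
  destruct (proj2 (Coset alpha)) as [h [Hh ->]].
  { exists (gone G). split; [eapply H_one; eauto | now rewrite gmul1l]. }
  assert (Pb0 : proj M Delta H theta (gmul G (ginv G h) beta)).
  { rewrite <- (mulKg G h theta). eapply proj_lmul; eauto. eapply H_inv; eauto. }
  assert (Step : exists b', proj M Delta H (gmul G theta u) b' /\
                            dist_le M Delta (gmul G (ginv G h) beta) b' 1)
    by (eapply proj_step with (N := N) (delta := delta); eauto).
  destruct Step as [b' [Pb' Db']]. exists (gmul G h b'). split.
  - rewrite mulgA_r. eapply proj_lmul; eauto.
  - rewrite <- (mulKVg G h beta), dist_le_lmul. eapply lg_le_mono; [exact Db' | lia].
Qed.
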